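(* Let $g\geqslant0$. With respect to the lexicographic monomial order with $\alpha>\gamma$, the set \[\{\zeta'_g,\ \gamma\zeta'_{g-2},\ \gamma^2\zeta'_{g-4},\ \ldots,\ \gamma^{\lfloor g/2\rfloor}\zeta'_{g-2\lfloor g/2\rfloor},\ \gamma^{\lceil g/2\rceil}\}\] is a Gröbner basis for $J'_g$. Consequently, a vector space basis of $\mathbb{C}[\alpha,\gamma]/J'_g$ is represented by the monomials $\alpha^a\gamma^c$ with $0\leqslant c<g/2$ and $0\leqslant a<g-2c$ when $g$ is even, and by the monomials $\alpha^a\gamma^c$ with $0\leqslant c\leqslant(g-1)/2$ and $0\leqslant a<g-2c$ when $g$ is odd.
   Context: Define $\zeta'_k\in\mathbb{C}[\alpha,\gamma]$ by $\zeta'_k=0$ for $k<0$, $\zeta'_0=1$, and $\zeta'_{k+1}=\alpha\zeta'_k+2k(k-1)\gamma\zeta'_{k-2}$ for $k\geqslant0$; let $J'_k=(\zeta'_k,\zeta'_{k+1},\zeta'_{k+2})$. *)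

From HB Require Import structures.
From mathcomp Require Import all_boot all_order all_algebra.
From mathcomp Require Import reals complex.
From mathcomp Require Import mpoly.
Unset Printing Implicit Defensive.
Import Order.TTheory GRing.Theory Num.Theory.
Local Open Scope ring_scope.

Definition CC (R : realType) : fieldType := complex R.

Definition PP (R : realType) := {mpoly (CC R)[2]}.
Definition ia : 'I_2 := ord0.
Definition ig : 'I_2 := ord_max.
Definition alpha (R : realType) : PP R := 'X_ia.
Definition gamma (R : realType) : PP R := 'X_ig.

(* zeta_triple k = (zeta'_k, zeta'_{k-1}, zeta'_{k-2}), with zeta'_j = 0 for j < 0 *)
Fixpoint zeta_triple (R : realType) (k : nat) : PP R * PP R * PP R :=
  match k with
  | 0 => (1, 0, 0)
  | k'.+1 =>
      let: (a, b, c) := zeta_triple R k' in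
      (alpha R * a + (2 * k' * (k'.-1))%N%:R * gamma R * c, a, b)
  end.

Definition zeta' (R : realType) (k : nat) : PP R := (zeta_triple R k).1.1.

Definition in_ideal {R : realType} (gens : seq (PP R)) (p : PP R) : Prop :=
  exists c : 'I_(size gens) -> PP R, p = \sum_(i < size gens) c i * gens`_i.

Definition J' (R : realType) (k : nat) : PP R -> Prop :=
  in_ideal [:: zeta' R k; zeta' R k.+1; zeta' R k.+2].

Definition lexle (m1 m2 : 'X_{1..2}) : bool :=
  (m1 ia < m2 ia)%N || ((m1 ia == m2 ia) && (m1 ig <= m2 ig)%N).

Definition is_lexLM {R : realType} (p : PP R) (m : 'X_{1..2}) : Prop :=
  m \in msupp p /\ forall m', m' \in msupp p -> lexle m' m.

Definition is_groebner_lex {R : realType} (G : seq (PP R)) (I : PP R -> Prop) : Prop :=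
  (forall g, g \in G -> I g) /\
  (forall f, I f -> f != 0 ->
     exists g, [/\ g \in G & exists mf mg,
        [/\ is_lexLM f mf, is_lexLM g mg & (mg <= mf)%MM]]).

Definition groebner_set (R : realType) (g : nat) : seq (PP R) :=
  [seq gamma R ^+ j * zeta' R (g - 2 * j) | j <- iota 0 (g./2).+1]
  ++ [:: gamma R ^+ (uphalf g)].

Definition mono (R : realType) (a c : nat) : PP R := alpha R ^+ a * gamma R ^+ c.

Definition basis_exp (g a c : nat) : bool :=
  if odd g then (c <= (g.-1)./2)%N && (a < g - 2 * c)%N
  else (2 * c < g)%N && (a < g - 2 * c)%N.

Definition quotient_basis {R : realType} (I : PP R -> Prop) (N : nat)
    (P : nat -> nat -> bool) : Prop :=
  (forall p : PP R, exists coef : 'I_N.+1 * 'I_N.+1 -> CC R,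
      I (p - \sum_(ac : 'I_N.+1 * 'I_N.+1 | P ac.1 ac.2) coef ac *: mono R ac.1 ac.2)) /\
  (forall coef : 'I_N.+1 * 'I_N.+1 -> CC R,
      I (\sum_(ac : 'I_N.+1 * 'I_N.+1 | P ac.1 ac.2) coef ac *: mono R ac.1 ac.2) ->
      forall ac : 'I_N.+1 * 'I_N.+1, P ac.1 ac.2 -> coef ac = 0).

From HB Require Import structures.
From mathcomp Require Import all_boot all_order all_algebra.
From mathcomp Require Import reals complex.
From mathcomp Require Import mpoly.
From mathcomp Require Import ring zify.
Import GRing.Theory Num.Theory.
Local Open Scope ring_scope.

(* Give alpha weight 1 and gamma weight 3.  Then zeta'_k is weighted
   homogeneous of weight k and zeta'_k = alpha^k mod gamma, so its lex leading
   monomial is alpha^k.  The recurrence makes gamma zeta'_n a multiple of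
   zeta'_(n+3) - alpha zeta'_(n+2), whence gamma J'_(g-2) is contained in J'_g,
   and every f in J'_g is P zeta'_g + gamma h with h in J'_(g-2).  By induction
   on g, the leading monomial alpha^a gamma^c of a nonzero f in J'_g satisfies
   a + 2c >= g: if P has a term alpha^a' free of gamma then f keeps the term
   alpha^(g+a'), all other contributions being divisible by gamma; otherwise
   P = gamma P1 and f = gamma (P1 zeta'_g + h) with P1 zeta'_g + h in
   J'_(g-2).  These monomials are exactly the multiples of
   the leading monomials alpha^(g-2c) gamma^c of the proposed basis, and the
   same induction reduces every polynomial modulo J'_g to a combination of the
   monomials with a + 2c < g, which are therefore a basis of the quotient. *)

Lemma exists_seq_max (T : eqType) (r : rel T) (s : seq T) :
  total r -> transitive r -> s != [::] ->
  exists2 m, m \in s & {in s, forall x, r x m}.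
Proof.
move=> r_total r_trans s_neq0.
have := mem_sort (fun x y => r y x) s; have := size_sort (fun x y => r y x) s.
have := sort_sorted (fun x y => r_total y x) s.
case: sort => [_ /esym/size0nil s0|m t /= m_t _ s_mt]; first by rewrite s0 in s_neq0.
have m_max := order_path_min (fun y x z ryx rzy => r_trans y z x rzy ryx) m_t.
exists m; first by rewrite -s_mt mem_head.
move=> x; rewrite -s_mt in_cons => /predU1P [->|/(allP m_max) //].
by case/orP: (r_total m m).
Qed.

Lemma ord2_cases (i : 'I_2) : i = ia \/ i = ig.
Proof. by case: i => [[|[|]]] //= hi; [left|right]; apply: val_inj. Qed.

Lemma mnm2_ext (m1 m2 : 'X_{1..2}) : m1 ia = m2 ia -> m1 ig = m2 ig -> m1 = m2.
Proof. by move=> h1 h2; apply/mnmP => i; case: (ord2_cases i) => ->. Qed.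

Definition mnm2 (a c : nat) : 'X_{1..2} := (U_(ia) *+ a + U_(ig) *+ c)%MM.

Definition mnm2E := (@mnmDE 2, @mnmBE 2, @mulmnE 2, @mnm1E 2, @mnm0E 2).

Lemma mnm2_ia a c : mnm2 a c ia = a.
Proof. by rewrite /mnm2 !mnm2E /=; lia. Qed.

Lemma mnm2_ig a c : mnm2 a c ig = c.
Proof. by rewrite /mnm2 !mnm2E /=; lia. Qed.

Lemma mnm2_eta (m : 'X_{1..2}) : mnm2 (m ia) (m ig) = m.
Proof. by apply: mnm2_ext; rewrite ?mnm2_ia ?mnm2_ig. Qed.

Lemma lexle_refl : reflexive lexle.
Proof. by move=> m; rewrite /lexle eqxx leqnn orbT. Qed.

Lemma lexle_total : total lexle.
Proof.
move=> m1 m2; rewrite /lexle.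
by case: (ltngtP (m1 ia) (m2 ia)) => //= _; apply: leq_total.
Qed.

Lemma lexle_trans : transitive lexle.
Proof.
move=> m2 m1 m3; rewrite /lexle.
case/orP=> [h1|/andP [/eqP e1 h1]] /orP [h2|/andP [/eqP e2 h2]].
- by rewrite (ltn_trans h1 h2).
- by rewrite -e2 h1.
- by rewrite e1 h2.
- by rewrite e1 e2 eqxx (leq_trans h1 h2) orbT.
Qed.

Lemma lexle_leq_ia m1 m2 : lexle m1 m2 -> (m1 ia <= m2 ia)%N.
Proof. by rewrite /lexle => /orP [/ltnW|/andP [/eqP -> _]]. Qed.

Lemma lexleD2l u m1 m2 : lexle (u + m1)%MM (u + m2)%MM = lexle m1 m2.
Proof. by rewrite /lexle !mnmDE ltn_add2l eqn_add2l leq_add2l. Qed.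

Definition wdeg (m : 'X_{1..2}) : nat := (m ia + 3 * m ig)%N.

Lemma wdegD m1 m2 : wdeg (m1 + m2) = (wdeg m1 + wdeg m2)%N.
Proof. by rewrite /wdeg !mnmDE; lia. Qed.

Definition standard (g : nat) (m : 'X_{1..2}) : bool := (m ia + 2 * m ig < g)%N.

Section Zeta.
Variable R : realType.
Local Notation P := (PP R).
Local Notation z := (zeta' R).

Lemma zeta'SSS n :
  z n.+3 = alpha R * z n.+2 + (2 * n.+2 * n.+1)%N%:R * gamma R * z n.
Proof. by rewrite /zeta' /=; case: (zeta_triple R n) => [[a b] c]. Qed.

(* For k < 2 the coefficient vanishes, so the truncation in k - 2 is harmless. *)
Lemma zeta'S k :
  z k.+1 = alpha R * z k + (2 * k * k.-1)%N%:R * gamma R * z (k - 2).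
Proof.
case: k => [|[|n]]; last by rewrite zeta'SSS !subSS subn0.
all: by rewrite /zeta' /=; ring.
Qed.

Lemma J'E g p :
  J' R g p <-> exists x y w, p = x * z g + y * z g.+1 + w * z g.+2.
Proof.
split=> [[c ->]|[x [y [w ->]]]].
  exists (c ord0), (c (lift ord0 ord0)), (c (lift ord0 (lift ord0 ord0))).
  by rewrite /= !big_ord_recl big_ord0 addr0 addrA.
exists (fun i : 'I_3 => [:: x; y; w]`_i).
by rewrite /= !big_ord_recl big_ord0 addr0 addrA.
Qed.

Lemma J'D g p q : J' R g p -> J' R g q -> J' R g (p + q).
Proof.
move=> /J'E [x [y [w ->]]] /J'E [x' [y' [w' ->]]]; apply/J'E.
by exists (x + x'), (y + y'), (w + w'); ring.
Qed.

Lemma J'M g q p : J' R g p -> J' R g (q * p).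
Proof.
move=> /J'E [x [y [w ->]]]; apply/J'E.
by exists (q * x), (q * y), (q * w); ring.
Qed.

Lemma J'B g p q : J' R g p -> J' R g q -> J' R g (p - q).
Proof. by move=> Jp Jq; apply: J'D Jp _; rewrite -mulN1r; apply: J'M. Qed.

Lemma J'0 g : J' R g 0.
Proof. by apply/J'E; exists 0, 0, 0; ring. Qed.

Lemma zeta'_J' g : J' R g (z g).
Proof. by apply/J'E; exists 1, 0, 0; ring. Qed.

Lemma zeta'S_J' g : J' R g (z g.+1).
Proof. by apply/J'E; exists 0, 1, 0; ring. Qed.

Lemma zeta'SS_J' g : J' R g (z g.+2).
Proof. by apply/J'E; exists 0, 0, 1; ring. Qed.

Lemma J'0_all p : J' R 0 p.
Proof. by rewrite -[p]mulr1; apply: J'M (zeta'_J' 0). Qed.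

Lemma J'_gamma_zeta' {k n} :
  J' R k (z n.+2) -> J' R k (z n.+3) -> J' R k (gamma R * z n).
Proof.
move=> J2 J3; set c := (2 * n.+2 * n.+1)%N.
have c_neq0 : (c%:R : CC R) != 0 by rewrite pnatr_eq0 /c; lia.
have -> : gamma R * z n = (c%:R^-1)%:MP * (z n.+3 - alpha R * z n.+2).
  rewrite zeta'SSS addrAC subrr add0r -mpolyC_nat !mulrA -mpolyCM.
  by rewrite mulVf // mpolyC1 mul1r.
by apply/J'M/J'B; [exact: J3 | exact: J'M J2].
Qed.

(* With truncated subtraction J'_(g-2) is the whole ring J'_0 when g < 2,
   which lets the inductions below step from g - 2 to g uniformly. *)
Lemma J'_gammaM g p : J' R (g - 2) p -> J' R g (gamma R * p).
Proof.
case: g => [|[|n]] Jp.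
- exact: J'0_all.
- rewrite mulrC -[gamma R]mulr1; apply: J'M.
  exact: J'_gamma_zeta' (zeta'S_J' 1) (zeta'SS_J' 1).
rewrite !subSS subn0 in Jp; case/J'E: Jp => [x [y [w ->]]].
have -> : gamma R * (x * z n + y * z n.+1 + w * z n.+2) =
    x * (gamma R * z n) + y * (gamma R * z n.+1) + (w * gamma R) * z n.+2.
  by ring.
apply: J'D; [apply: J'D|]; apply: J'M; last exact: zeta'_J'.
  exact: J'_gamma_zeta' (zeta'_J' n.+2) (zeta'S_J' n.+2).
exact: J'_gamma_zeta' (zeta'S_J' n.+2) (zeta'SS_J' n.+2).
Qed.

Lemma J'_gammaXM g j p : J' R (g - 2 * j) p -> J' R g (gamma R ^+ j * p).
Proof.
elim: j g => [|j IHj] g Jp; first by rewrite mul1r; rewrite muln0 subn0 in Jp.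
rewrite exprS -mulrA; apply/J'_gammaM/IHj.
by rewrite -subnDA -mulnS.
Qed.

Lemma J'_decomp {g f} : J' R g f ->
  exists Q h, f = Q * z g + gamma R * h /\ J' R (g - 2) h.
Proof.
case/J'E=> [x [y [w ->]]].
set c0 := (2 * g * g.-1)%N%:R : P; set c1 := (2 * g.+1 * g)%N%:R : P.
exists (x + y * alpha R + w * alpha R ^+ 2),
  (y * c0 * z (g - 2) + w * (alpha R * c0 * z (g - 2) + c1 * z (g - 1))).
split; first by rewrite (zeta'S g.+1) /= zeta'S -/c0 -/c1 /=; ring.
rewrite {}/c0 {}/c1; case: g => [|[|n]]; try exact: J'0_all.
rewrite !subSS !subn0; apply: J'D; first exact/J'M/zeta'_J'.
by apply/J'M/J'D; apply: J'M; [apply: zeta'_J' | apply: zeta'S_J'].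
Qed.

Definition whomog (d : nat) (p : P) := {in msupp p, forall m, wdeg m = d}.

Lemma whomog0 d : whomog d 0.
Proof. by move=> m; rewrite msupp0. Qed.

Lemma whomogX m : whomog (wdeg m) 'X_[m].
Proof. by move=> m'; rewrite msuppX mem_seq1 => /eqP ->. Qed.

Lemma whomog_alpha : whomog 1 (alpha R).
Proof. by have := whomogX U_(ia); rewrite /wdeg !mnm1E. Qed.

Lemma whomog_gamma : whomog 3 (gamma R).
Proof. by have := whomogX U_(ig); rewrite /wdeg !mnm1E. Qed.

Lemma whomog_nat k : whomog 0 k%:R.
Proof.
rewrite -mpolyC_nat => m; rewrite msuppC; case: eqP => //= _.
by rewrite mem_seq1 => /eqP ->; rewrite /wdeg !mnm0E.
Qed.

Lemma whomogD d p q : whomog d p -> whomog d q -> whomog d (p + q).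
Proof. by move=> hp hq m /msuppD_le; rewrite mem_cat => /orP [/hp|/hq]. Qed.

Lemma whomogM {d1 d2 p q} :
  whomog d1 p -> whomog d2 q -> whomog (d1 + d2) (p * q).
Proof.
move=> hp hq m /msuppM_le /allpairsP [[m1 m2] /= [h1 h2 ->]].
by rewrite wdegD hp // hq.
Qed.

Lemma zeta'_whomog k : whomog k (z k).
Proof.
elim/ltn_ind: k => -[_|k IHk]; first exact: (whomog_nat 1).
rewrite zeta'S; apply: whomogD.
  exact: whomogM whomog_alpha (IHk _ _).
case: k IHk => [|[|k]] IHk; rewrite ?muln0 ?mul0r; try exact: whomog0.
have /IHk z_k : (k < k.+3)%N by lia.
rewrite !subSS subn0 -[k.+3]/(0 + 3 + k)%N.
exact: whomogM (whomogM (whomog_nat _) whomog_gamma) z_k.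
Qed.

Lemma zeta'_alpha_mod_gamma k : exists q, z k = alpha R ^+ k + gamma R * q.
Proof.
elim: k => [|k [q IHq]]; first by exists 0; rewrite mulr0 addr0.
exists (alpha R * q + (2 * k * k.-1)%N%:R * z (k - 2)).
by rewrite zeta'S IHq exprS; ring.
Qed.

Lemma mcoeff_gammaM (q : P) (m : 'X_{1..2}) : m ig = 0%N -> (gamma R * q)@_m = 0.
Proof.
move=> m_ig; apply: memN_msupp_eq0; rewrite mulrC (perm_mem (msuppMX _ _)).
apply/mapP => -[m' _ e].
by move: m_ig; rewrite e mnmDE mnm1E.
Qed.

Lemma alphaX k : alpha R ^+ k = 'X_[mnm2 k 0].
Proof. by rewrite /alpha mpolyXn /mnm2 mulm0n addm0. Qed.

Lemma gammaX j : gamma R ^+ j = 'X_[mnm2 0 j].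
Proof. by rewrite /gamma mpolyXn /mnm2 mulm0n add0m. Qed.

Lemma mono_mnm2 a c : mono R a c = 'X_[mnm2 a c].
Proof. by rewrite /mono /alpha /gamma !mpolyXn -mpolyXD. Qed.

Lemma lexLM_exists {f : P} : f != 0 -> exists m, is_lexLM f m.
Proof.
rewrite -msupp_eq0 => /(exists_seq_max _ _ _ lexle_total lexle_trans) [m hm hmax].
by exists m.
Qed.

Lemma lexLM_X u : is_lexLM ('X_[u] : P) u.
Proof.
split=> [|m']; first by rewrite msuppX mem_seq1.
by rewrite msuppX mem_seq1 => /eqP ->; apply: lexle_refl.
Qed.

Lemma lexLM_XM u (f : P) m : is_lexLM f m -> is_lexLM ('X_[u] * f) (u + m)%MM.
Proof.
case=> hm hmax; rewrite mulrC; split.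
  by rewrite (perm_mem (msuppMX _ _)); apply: map_f.
move=> m'; rewrite (perm_mem (msuppMX _ _)) => /mapP [x hx ->].
by rewrite lexleD2l hmax.
Qed.

Lemma zeta'_lexLM k : is_lexLM (z k) (mnm2 k 0).
Proof.
split=> [|m m_z].
  have [q ->] := zeta'_alpha_mod_gamma k.
  rewrite mcoeff_msupp mcoeffD alphaX mcoeffX eqxx mcoeff_gammaM ?mnm2_ig //.
  by rewrite addr0 oner_neq0.
have := @zeta'_whomog k m m_z; rewrite /wdeg /lexle mnm2_ia mnm2_ig.
by case: (posnP (m ig)) => [->|]; lia.
Qed.

Lemma gamma_dvd (p : P) :
  {in msupp p, forall m : 'X_{1..2}, 0 < m ig}%N -> exists q, p = gamma R * q.
Proof.
move=> p_ig; exists (\sum_(m <- msupp p) p@_m *: 'X_[m - U_(ig)]).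
rewrite {1}(mpolyE p) mulr_sumr big_seq [RHS]big_seq; apply: eq_bigr => m m_p.
rewrite -scalerAr /gamma -mpolyXD; congr (_ *: 'X_[_]).
by move: (p_ig m m_p) => m_ig; apply: mnm2_ext; rewrite !mnm2E /=; lia.
Qed.

Lemma zeta'_J'_subn2 g : J' R (g - 2) (z g).
Proof.
by case: g => [|[|n]]; [apply: J'0_all.. | rewrite !subSS subn0; apply: zeta'SS_J'].
Qed.

Lemma lexLM_alpha_ge {g} {Q h : P} {m mf : 'X_{1..2}} :
  m \in msupp Q -> m ig = 0%N -> is_lexLM (Q * z g + gamma R * h) mf ->
  (g <= mf ia)%N.
Proof.
move=> m_Q m_ig [_ mf_max]; have [q z_g] := zeta'_alpha_mod_gamma g.
rewrite z_g in mf_max.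
set M := (mnm2 g 0 + m)%MM.
have M_ig : M ig = 0%N by rewrite /M mnmDE mnm2_ig m_ig.
have : M \in msupp (Q * (alpha R ^+ g + gamma R * q) + gamma R * h).
  rewrite mulrDr -addrA mulrCA -mulrDr mcoeff_msupp mcoeffD mcoeff_gammaM //.
  by rewrite addr0 alphaX /M mcoeffMX -mcoeff_msupp.
by move=> /mf_max /lexle_leq_ia; rewrite /M mnmDE mnm2_ia; lia.
Qed.

Lemma J'_lexLM_ge {g} {f : P} : J' R g f -> f != 0 ->
  exists2 mf, is_lexLM f mf & (g <= mf ia + 2 * mf ig)%N.
Proof.
elim/ltn_ind: g f => g IHg f Jf f_neq0.
case: (posnP g) => [->|g_gt0].
  by have [mf LMf] := lexLM_exists f_neq0; exists mf.
case/J'_decomp: Jf f_neq0 => Q [h [-> Jh]] f_neq0.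
case: (boolP (has (fun m : 'X_{1..2} => m ig == 0%N) (msupp Q))).
  case/hasP=> m m_Q /eqP m_ig; have [mf LMf] := lexLM_exists f_neq0.
  by exists mf => //; have := lexLM_alpha_ge m_Q m_ig LMf; lia.
move/hasPn=> Q_ig; have [Q1 Q_eq] : exists Q1, Q = gamma R * Q1.
  by apply: gamma_dvd => m /Q_ig; rewrite lt0n.
rewrite Q_eq -mulrA -mulrDr in f_neq0 *; set f1 := Q1 * z g + h.
have Jf1 : J' R (g - 2) f1 by apply: J'D Jh; apply/J'M/zeta'_J'_subn2.
have f1_neq0 : f1 != 0 by move: f_neq0; rewrite mulf_eq0 negb_or => /andP [].
have [|mf1 LMf1 mf1_ge] := IHg (g - 2)%N _ f1 Jf1 f1_neq0; first by lia.
exists (U_(ig) + mf1)%MM; first exact: lexLM_XM.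
by rewrite !mnmDE !mnm1E /=; lia.
Qed.

Lemma groebner_set_J' g q : q \in groebner_set R g -> J' R g q.
Proof.
rewrite mem_cat mem_seq1 => /orP [/mapP [j _ ->]|/eqP ->].
  exact/J'_gammaXM/zeta'_J'.
rewrite -[gamma R ^+ _]mulr1; apply: J'_gammaXM.
have -> : (g - 2 * uphalf g = 0)%N by rewrite uphalf_half; lia.
exact: J'0_all.
Qed.

Lemma groebner_set_lexLM_dvd {g} {mf : 'X_{1..2}} :
  (g <= mf ia + 2 * mf ig)%N ->
  exists2 q, q \in groebner_set R g & exists2 mq, is_lexLM q mq & (mq <= mf)%MM.
Proof.
move=> mf_ge; case: (leqP (mf ig) g./2) => [c_le|c_gt].
  exists (gamma R ^+ mf ig * z (g - 2 * mf ig)).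
    by rewrite mem_cat; apply/orP; left; apply/mapP; exists (mf ig); rewrite ?mem_iota.
  exists (mnm2 0 (mf ig) + mnm2 (g - 2 * mf ig) 0)%MM.
    by rewrite gammaX; apply/lexLM_XM/zeta'_lexLM.
  by apply/mnm_lepP => i; case: (ord2_cases i) => ->; rewrite mnmDE ?mnm2_ia ?mnm2_ig; lia.
exists (gamma R ^+ uphalf g); first by rewrite mem_cat mem_seq1 eqxx orbT.
exists (mnm2 0 (uphalf g)); first by rewrite gammaX; apply: lexLM_X.
by apply/mnm_lepP => i; case: (ord2_cases i) => ->; rewrite ?mnm2_ia ?mnm2_ig //; lia.
Qed.

Definition standard_rep g (p : P) :=
  exists2 s, {in msupp s, forall m, standard g m} & J' R g (p - s).

Lemma standard_rep0 g : standard_rep g 0.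
Proof. by exists 0; [move=> m; rewrite msupp0 | rewrite subrr; apply: J'0]. Qed.

Lemma standard_repD g p q :
  standard_rep g p -> standard_rep g q -> standard_rep g (p + q).
Proof.
move=> [s1 s1_std J1] [s2 s2_std J2]; exists (s1 + s2).
  by move=> m /msuppD_le; rewrite mem_cat => /orP [/s1_std|/s2_std].
by rewrite opprD addrACA; apply: J'D.
Qed.

Lemma standard_repZ g c p : standard_rep g p -> standard_rep g (c *: p).
Proof.
move=> [s s_std Js]; exists (c *: s); first by move=> m /msuppZ_le /s_std.
by rewrite -scalerBr -mul_mpolyC; apply: J'M.
Qed.

Lemma standard_rep_J'D g u p :
  J' R g u -> standard_rep g p -> standard_rep g (u + p).
Proof. by move=> Ju [s s_std Js]; exists s => //; rewrite -addrA; apply: J'D. Qed.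

Lemma standard_rep_X g m :
  (forall q, standard_rep g (gamma R * q)) -> standard_rep g 'X_[m].
Proof.
move=> rep_gamma; case: (posnP (m ig)) => m_ig; last first.
  have [q ->] : exists q, 'X_[m] = gamma R * q.
    by apply: gamma_dvd => m'; rewrite msuppX mem_seq1 => /eqP ->.
  exact: rep_gamma.
case: (ltnP (m ia) g) => m_ia.
  exists 'X_[m]; last by rewrite subrr; apply: J'0.
  by move=> m'; rewrite msuppX mem_seq1 => /eqP ->; rewrite /standard m_ig; lia.
have [q z_g] := zeta'_alpha_mod_gamma g; set m' := (m - mnm2 g 0)%MM.
have -> : 'X_[m] = 'X_[m'] * z g + gamma R * (- 'X_[m'] * q).
  have -> : m = (m' + mnm2 g 0)%MM.
    by apply: mnm2_ext; rewrite /m' mnmDE mnmBE ?mnm2_ia ?mnm2_ig; lia.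
  by rewrite mpolyXD z_g alphaX; ring.
by apply: standard_rep_J'D; [apply/J'M/zeta'_J' | apply: rep_gamma].
Qed.

Lemma standard_rep_all g p : standard_rep g p.
Proof.
elim/ltn_ind: g p => g IHg p.
case: (posnP g) => [->|g_gt0].
  by exists 0; [move=> m; rewrite msupp0 | apply: J'0_all].
have rep_gamma q : standard_rep g (gamma R * q).
  have [|s s_std Js] := IHg (g - 2)%N _ q; first by lia.
  exists (gamma R * s); last by rewrite -mulrBr; apply: J'_gammaM.
  move=> m; rewrite mulrC (perm_mem (msuppMX _ _)) => /mapP [m' /s_std m'_std ->].
  by move: m'_std; rewrite /standard !mnmDE !mnm1E /=; lia.
rewrite (mpolyE p); apply: (big_ind (standard_rep g)).
- exact: standard_rep0.
- exact: standard_repD.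
- by move=> m _; apply/standard_repZ/standard_rep_X.
Qed.

Lemma standard_J'_eq0 {g} {s : P} :
  {in msupp s, forall m, standard g m} -> J' R g s -> s = 0.
Proof.
move=> s_std Js; apply/eqP; apply: contraT => s_neq0.
have [mf [mf_s _] mf_ge] := J'_lexLM_ge Js s_neq0.
by have := s_std mf mf_s; rewrite /standard; lia.
Qed.

Lemma basis_expE g a c : basis_exp g a c = standard g (mnm2 a c).
Proof.
rewrite /basis_exp /standard mnm2_ia mnm2_ig.
by case: odd (odd_double_half g) => /= g_eq; lia.
Qed.

Section BasisSum.
Variables (g : nat) (coef : 'I_g.+1 * 'I_g.+1 -> CC R).
Local Notation basis_sum :=
  (\sum_(ac : 'I_g.+1 * 'I_g.+1 | basis_exp g ac.1 ac.2) coef ac *: mono R ac.1 ac.2).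

Lemma mcoeff_basis_sum m :
  basis_sum@_m = if standard g m then coef (inord (m ia), inord (m ig)) else 0.
Proof.
rewrite raddf_sum /=.
under eq_bigr => ac _ do rewrite mono_mnm2 mcoeffZ mcoeffX.
case: ifP => m_std.
  have [ia_lt ig_lt] : (m ia < g.+1)%N /\ (m ig < g.+1)%N.
    by move: m_std; rewrite /standard; lia.
  rewrite (bigD1 (inord (m ia), inord (m ig))) /=; last first.
    by rewrite basis_expE !inordK // mnm2_eta.
  rewrite !inordK // mnm2_eta eqxx mulr1 big1 ?addr0 // => -[a c] /andP [_ ac_neq].
  case: eqP => [m_eq|]; last by rewrite mulr0.
  move/negP: ac_neq; case; apply/eqP; congr pair; apply: val_inj;
    by rewrite /= inordK // -m_eq ?mnm2_ia ?mnm2_ig.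
rewrite big1 // => ac ac_basis; case: eqP => [m_eq|]; last by rewrite mulr0.
by move: m_std; rewrite -m_eq -basis_expE ac_basis.
Qed.

Lemma msupp_basis_sum : {in msupp basis_sum, forall m, standard g m}.
Proof. by move=> m; rewrite mcoeff_msupp mcoeff_basis_sum; case: ifP; rewrite ?eqxx. Qed.

End BasisSum.

Lemma mpolyE_standard g (s : P) : {in msupp s, forall m, standard g m} ->
  \sum_(ac : 'I_g.+1 * 'I_g.+1 | basis_exp g ac.1 ac.2)
    s@_(mnm2 ac.1 ac.2) *: mono R ac.1 ac.2 = s.
Proof.
move=> s_std; apply/mpolyP => m; rewrite mcoeff_basis_sum; case: ifP => m_std.
  have [ia_lt ig_lt] : (m ia < g.+1)%N /\ (m ig < g.+1)%N.
    by move: m_std; rewrite /standard; lia.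
  by rewrite !inordK // mnm2_eta.
by apply/esym/memN_msupp_eq0; apply: contraFN m_std => /s_std.
Qed.

End Zeta.

Theorem proposition5p15 (R : realType) (g : nat) :
  is_groebner_lex (groebner_set R g) (J' R g) /\
  quotient_basis (J' R g) g (basis_exp g).
Proof.
split.
  split=> [q /groebner_set_J' // | f Jf f_neq0].
  have [mf LMf mf_ge] := J'_lexLM_ge R Jf f_neq0.
  have [q Gq [mq LMq mq_mf]] := groebner_set_lexLM_dvd R mf_ge.
  by exists q; split=> //; exists mf, mq.
split=> [p | coef Jc [a c] /= ac_basis].
  have [s s_std Jps] := standard_rep_all R g p.
  by exists (fun ac : 'I_g.+1 * 'I_g.+1 => s@_(mnm2 ac.1 ac.2)); rewrite mpolyE_standard.
have := mcoeff_basis_sum R g coef (mnm2 a c).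
rewrite (standard_J'_eq0 R (msupp_basis_sum R g coef) Jc) mcoeff0.
by rewrite -basis_expE ac_basis mnm2_ia mnm2_ig !inord_val.
Qed.
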